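(* Assume the setting below and suppose $\tau\le0$ and $|x_k^{(1)}|>a$. Define $r_k=\lceil\log_2(|x_k^{(1)}|/a)\rceil$. Then (with probability one) the step returned by the bracketing line search at iteration $k$ is $t_k=2^{r_k}$.
   Context: Let $n\ge2$, $a\ge\sqrt{n-1}$, $f(x)=a|x^{(1)}|+\sum_{i=2}^n x^{(i)}$ on $\mathbb{R}^n$ ($x^{(i)}$ the $i$-th coordinate), $0<c_1<c_2<1$, and $\tau=c_1+\frac{(n-1)(c_1-1)}{a^2}$. The initial point $x_0$ is drawn from the normal distribution on $\mathbb{R}^n$ (independently of $a$), and $x_{k+1}=x_k+t_kd_k$, $d_k=-\nabla f(x_k)$, where $t_k$ is returned by the following Armijo–Wolfe bracketing line search: set $\alpha=0$, $\beta=+\infty$, $t=1$; repeat: if $A(t)$ fails set $\beta\leftarrow t$; else if $W(t)$ fails set $\alpha\leftarrow t$; else stop and return $t$; then if $\beta<+\infty$ set $t\leftarrow(\alpha+\beta)/2$, otherwise $t\leftarrow2\alpha$. Here $A(t)$: $f(x_k+td_k)\le f(x_k)+c_1t\nabla f(x_k)^Td_k$, and $W(t)$: $f$ is differentiable at $x_k+td_k$ and $\nabla f(x_k+td_k)^Td_k\ge c_2\nabla f(x_k)^Td_k$. All statements are understood to hold with probability one. *)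

From HB Require Import structures.
From mathcomp Require Import all_boot all_order all_algebra.
From mathcomp Require Import all_classical all_reals all_analysis.
Set Implicit Arguments. Unset Strict Implicit. Unset Printing Implicit Defensive.
Import Order.TTheory GRing.Theory Num.Theory.
Import numFieldNormedType.Exports.
Local Open Scope classical_set_scope.
Local Open Scope ring_scope.

Section Defs.
Variable R : realType.

(* Points of R^N are row vectors 'rV[R]_N; coordinate x^(i+1) is x 0 i. *)

Definition dotv (N : nat) (u v : 'rV[R]_N) : R := \sum_(i < N) u 0 i * v 0 i.

Definition gradv (N : nat) (f : 'rV[R]_N -> R^o) (x : 'rV[R]_N) : 'rV[R]_N :=
  \row_(i < N) ('d f x (delta_mx 0 i : 'rV[R]_N)).

Definition ftest (m : nat) (a : R) (x : 'rV[R]_m.+1) : R^o :=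
  a * `|x 0 ord0| + \sum_(i < m.+1 | i != ord0) x 0 i.

Definition armijo (N : nat) (f : 'rV[R]_N -> R^o) (c1 : R) (x d : 'rV[R]_N) (t : R) : Prop :=
  f (x + t *: d) <= f x + c1 * t * dotv (gradv f x) d.

Definition wolfe (N : nat) (f : 'rV[R]_N -> R^o) (c2 : R) (x d : 'rV[R]_N) (t : R) : Prop :=
  differentiable f (x + t *: d) /\
  dotv (gradv f (x + t *: d)) d >= c2 * dotv (gradv f x) d.

(* State (alpha, beta, t) of the bracketing line search after j passes of the
   loop; beta = None encodes beta = +oo.  If the loop already stopped, later
   states are irrelevant (see ls_returns). *)
Fixpoint ls_state (N : nat) (f : 'rV[R]_N -> R^o) (c1 c2 : R) (x d : 'rV[R]_N)
    (j : nat) : R * option R * R :=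
  match j with
  | O => (0, None, 1)
  | S j' =>
    let '(al, be, t) := ls_state f c1 c2 x d j' in
    let '(al', be') :=
      if `[< armijo f c1 x d t >] then
        (if `[< wolfe f c2 x d t >] then (al, be) else (t, be))
      else (al, Some t) in
    (al', be', match be' with Some b => (al' + b) / 2 | None => 2 * al' end)
  end.

Definition ls_trial (N : nat) (f : 'rV[R]_N -> R^o) (c1 c2 : R) (x d : 'rV[R]_N)
  (j : nat) : R := (ls_state f c1 c2 x d j).2.

Definition ls_returns (N : nat) (f : 'rV[R]_N -> R^o) (c1 c2 : R) (x d : 'rV[R]_N)
    (t : R) : Prop :=
  exists j : nat,
    [/\ armijo f c1 x d (ls_trial f c1 c2 x d j),
        wolfe f c2 x d (ls_trial f c1 c2 x d j),
        (forall i : nat, (i < j)%N ->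
           ~ (armijo f c1 x d (ls_trial f c1 c2 x d i) /\
              wolfe f c2 x d (ls_trial f c1 c2 x d i))) &
        t = ls_trial f c1 c2 x d j].

Definition gd_run (N : nat) (f : 'rV[R]_N -> R^o) (c1 c2 : R) (xs : nat -> 'rV[R]_N)
    (k : nat) : Prop :=
  forall j : nat, (j < k)%N ->
    differentiable f (xs j) /\
    exists t : R, ls_returns f c1 c2 (xs j) (- gradv f (xs j)) t /\
                  xs j.+1 = xs j + t *: (- gradv f (xs j)).

(* Null sets of the standard normal distribution N(0, I_N) on R^N: sets
   that can be covered by countably many closed boxes of arbitrarily small
   total Gaussian (product) measure, i.e. sets of Gaussian outer measure 0. *)
Definition gauss_null (N : nat) (S : set 'rV[R]_N) : Prop :=
  forall eps : R, 0 < eps ->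
  exists lo hi : nat -> 'rV[R]_N,
    S `<=` \bigcup_(j in [set: nat]) [set y | forall i : 'I_N, lo j 0 i <= y 0 i <= hi j 0 i] /\
    (\sum_(0 <= j <oo)
        (\prod_(i < N) fine (normal_prob 0 1 `[lo j 0 i, hi j 0 i]%classic))%:E < eps%:E)%E.

End Defs.

From HB Require Import structures.
From mathcomp Require Import all_boot all_order all_algebra.
From mathcomp Require Import all_classical all_reals all_analysis.
From mathcomp Require Import ring lra.
Import Order.TTheory GRing.Theory Num.Theory.
Import numFieldNormedType.Exports.
Local Open Scope classical_set_scope.
Local Open Scope ring_scope.

Set Implicit Arguments.
Unset Strict Implicit.
Unset Printing Implicit Defensive.

(* Along d = -grad f(x) the coordinate x^(1) moves by -t a sg(x^(1)) and every
   other coordinate by -t.  As long as t a < |x^(1)| the kink of |x^(1)| is not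
   crossed, f decreases with constant slope -(a^2 + m) and the gradient does not
   change: Armijo holds, Wolfe fails, and the search doubles t.  The first power
   of 2 with t a > |x^(1)| overshoots the kink by at most |x^(1)|; Armijo still
   holds because the remaining decrease t m dominates c1 t (a^2 + m) exactly
   when tau <= 0, and Wolfe holds because the new slope a^2 - m is
   nonnegative.  This breaks down only if some iterate hits t a = |x^(1)| or
   x^(1) = 0.  Every trial step is dyadic, so x_k^(1)/a - x_0^(1)/a is dyadic,
   and both events force x_0^(1)/a to be dyadic: a countable union of
   hyperplanes, hence a Gaussian null set. *)

Section Dyadic.
Context {R : realType}.

Definition dyadic (r : R) : Prop := exists (p : int) (q : nat), r = p%:~R / 2 ^+ q.

Lemma dyadic_int (z : int) : dyadic z%:~R.
Proof. by exists z, 0%N; rewrite expr0 divr1. Qed.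

Lemma dyadic_nat (n : nat) : dyadic n%:R.
Proof. by rewrite pmulrn; apply: dyadic_int. Qed.

Lemma dyadic_half : dyadic 2^-1.
Proof. by exists 1, 1%N; rewrite expr1 mul1r. Qed.

Lemma dyadicD r s : dyadic r -> dyadic s -> dyadic (r + s).
Proof.
move=> [p [q ->]] [p' [q' ->]]; exists (p * 2 ^+ q' + p' * 2 ^+ q), (q + q')%N.
have [h h'] : (2 : R) ^+ q != 0 /\ (2 : R) ^+ q' != 0 by split; apply: expf_neq0.
by rewrite intrD !intrM !rmorphXn /= exprD; field; rewrite h h'.
Qed.

Lemma dyadicM r s : dyadic r -> dyadic s -> dyadic (r * s).
Proof.
move=> [p [q ->]] [p' [q' ->]]; exists (p * p'), (q + q')%N.
have [h h'] : (2 : R) ^+ q != 0 /\ (2 : R) ^+ q' != 0 by split; apply: expf_neq0.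
by rewrite intrM exprD; field; rewrite h h'.
Qed.

Lemma dyadic_exp2 (n : nat) : dyadic (2 ^+ n).
Proof. by have := dyadic_int (2 ^+ n); rewrite rmorphXn. Qed.

Lemma dyadic_sg (r : R) : dyadic (Num.sg r).
Proof. by rewrite sgrEz; apply: dyadic_int. Qed.

Definition dyadic_enum (n : nat) : R :=
  if @unpickle (int * nat)%type n is Some (p, q) then p%:~R / 2 ^+ q else 0.

Lemma dyadic_enumP r : dyadic r -> exists n, r = dyadic_enum n.
Proof. by move=> [p [q ->]]; exists (pickle (p, q)); rewrite /dyadic_enum pickleK. Qed.

End Dyadic.

Section BracketingLineSearch.
Context {R : realType} {N : nat}.
Variables (f : 'rV[R]_N -> R^o) (c1 c2 : R) (x d : 'rV[R]_N).

Lemma ls_trial_dyadic j : dyadic (ls_trial f c1 c2 x d j).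
Proof.
suff : let: (al, be, t) := ls_state f c1 c2 x d j in
    [/\ dyadic al, (forall b, be = Some b -> dyadic b) & dyadic t].
  by rewrite /ls_trial; case: ls_state => [[al be] t] [].
have next (al : R) (be : option R) : dyadic al -> (forall b, be = Some b -> dyadic b) ->
    [/\ dyadic al, (forall b, be = Some b -> dyadic b) &
        dyadic (match be with Some b => (al + b) / 2 | None => 2 * al end)].
  move=> hal hbe; split=> //; case: be hbe => [b|] hbe.
    by apply: dyadicM; [apply: dyadicD => //; apply: hbe|apply: dyadic_half].
  by apply: dyadicM => //; exact: dyadic_nat.
elim: j => [|j] /=.
  by split=> //; [exact: (@dyadic_nat R 0)|exact: (@dyadic_nat R 1)].
case: ls_state => [[al be] t] [hal hbe ht].
by case: asboolP => _; [case: asboolP => _|]; apply: next => // b [<-].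
Qed.

Lemma ls_state_doubling J :
    (forall i, (i < J)%N -> armijo f c1 x d (2 ^+ i) /\ ~ wolfe f c2 x d (2 ^+ i)) ->
  forall i, (i <= J)%N -> exists al, ls_state f c1 c2 x d i = (al, None, 2 ^+ i).
Proof.
move=> AnotW; elim=> [_|i IH iJ]; first by exists 0; rewrite expr0.
have [al stE] := IH (ltnW iJ); have [hA hW] := AnotW i iJ.
by exists (2 ^+ i) => /=; rewrite stE (asboolT hA) (asboolF hW) exprS.
Qed.

Lemma ls_returns_doubling J :
    (forall i, (i < J)%N -> armijo f c1 x d (2 ^+ i) /\ ~ wolfe f c2 x d (2 ^+ i)) ->
    armijo f c1 x d (2 ^+ J) -> wolfe f c2 x d (2 ^+ J) ->
  ls_returns f c1 c2 x d (2 ^+ J).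
Proof.
move=> AnotW hA hW.
have trialE i : (i <= J)%N -> ls_trial f c1 c2 x d i = 2 ^+ i.
  by move=> iJ; rewrite /ls_trial; have [al ->] := ls_state_doubling AnotW iJ.
exists J; rewrite trialE //; split=> // i iJ.
by rewrite trialE ?(ltnW iJ) //; case: (AnotW i iJ) => _ nW [].
Qed.

End BracketingLineSearch.

Section GaussNull.
Context {R : realType}.

Lemma normal_prob_point (e : R) : fine (normal_prob 0 1 `[e, e]%classic) = 0.
Proof.
rewrite set_itv1.
have := (null_content_dominatesP _ _).1 (@normal_prob_dominates R 0 1) [set e].
by move=> ->//; apply: lebesgue_measure_set1.
Qed.

Lemma gauss_nullS N (A B : set 'rV[R]_N) :
  A `<=` B -> gauss_null B -> gauss_null A.
Proof.
move=> AB nB eps eps0; have [lo [hi [Bcov small]]] := nB eps eps0.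
by exists lo, hi; split=> //; apply: subset_trans Bcov.
Qed.

Lemma gauss_null_coord_seq N (i0 : 'I_N) (u : nat -> R) :
  gauss_null [set y : 'rV[R]_N | exists n, y 0 i0 = u n].
Proof.
move=> eps eps0.
(* The n-th box is the slice y^(i0) = u k of the cube [-M, M]^N, where
   n encodes (k, M). *)
pose box (n : nat) : R * R :=
  if @unpickle (nat * nat)%type n is Some (k, M) then (u k, M%:R) else (0, 0).
exists (fun n => \row_i (if i == i0 then (box n).1 else - (box n).2)).
exists (fun n => \row_i (if i == i0 then (box n).1 else (box n).2)).
split.
  move=> y [k yk]; pose M := Num.bound (\sum_i `|y 0 i|).
  exists (pickle (k, M)) => //= i; rewrite !mxE /box pickleK /=.
  case: eqP => [->|_]; first by rewrite yk lexx.
  rewrite -ler_norml; apply/ltW/(le_lt_trans _ (archi_boundP _)); last exact: sumr_ge0.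
  by rewrite (bigD1 i) //= lerDl sumr_ge0.
rewrite eseries0 ?lte_fin // => j _ _.
by rewrite (bigD1 i0) //= !mxE eqxx normal_prob_point mul0r.
Qed.

Lemma gauss_null_dyadic_coord N (i0 : 'I_N) (a : R) : a != 0 ->
  gauss_null [set y : 'rV[R]_N | dyadic (y 0 i0 / a)].
Proof.
move=> a0; apply: gauss_nullS (gauss_null_coord_seq i0 (fun n => a * dyadic_enum n)).
by move=> y /dyadic_enumP [n yn]; exists n; rewrite -yn mulrC divfK.
Qed.

End GaussNull.

Section Calculus.
Context {R : realType}.

Lemma derive_along_affine (V : normedModType R) (g : V -> R^o) (y v : V) (c : R) :
  (forall h : R, g (h *: v + y) = g y + h * c) -> 'D_v g y = c.
Proof.
move=> gE; apply: cvg_lim; first exact: norm_hausdorff.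
apply: cvg_near_cst; near=> h => /=.
have h0 : h != 0 by near: h; exact: nbhs_dnbhs_neq.
by rewrite gE addrC addKr [_ *: _]mulrA mulVf // mul1r.
Unshelve. all: by end_near. Qed.

Lemma normr_near_sg (r0 : R) : r0 != 0 -> \forall r \near r0, `|r| = Num.sg r0 * r.
Proof.
move=> r00; near=> r.
have near_r : `|r0 - r| < `|r0| by near: r; apply: cvgr_dist_lt => //; rewrite normr_gt0.
have [r0p|r0n] := ltrP 0 r0.
  have rp : 0 < r.
    by move: near_r; rewrite (gtr0_norm r0p) => /ltr_normlW; lra.
  by rewrite gtr0_norm // gtr0_sg // mul1r.
have r0n' : r0 < 0 by rewrite lt_neqAle r00 r0n.
have rn : r < 0.
  by move: near_r; rewrite (ltr0_norm r0n') distrC => /ltr_normlW; lra.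
by rewrite ltr0_norm // ltr0_sg // mulN1r.
Unshelve. all: by end_near. Qed.

Lemma differentiable_normr (r0 : R) : r0 != 0 ->
  differentiable (fun r : R^o => (`|r| : R^o)) r0.
Proof.
move=> r00; apply/derivable1_diffP.
apply: (@near_eq_derivable _ _ _ (fun r : R^o => Num.sg r0 *: r)).
  by near=> r; rewrite (near (normr_near_sg r00) r).
by apply/derivable1_diffP.
Unshelve. all: by end_near. Qed.

End Calculus.

Section TestFunction.
Context {R : realType}.
Variables (m : nat) (a : R).

Local Notation f := (@ftest R m a).

Definition ftest_branch (s : R) (x : 'rV[R]_m.+1) : R^o :=
  a * s * x 0 ord0 + \sum_(i < m.+1 | i != ord0) x 0 i.

Definition branch_grad (s : R) : 'rV[R]_m.+1 :=
  \row_i (if i == ord0 then a * s else 1).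

Lemma ftest_branch_affine s (y v : 'rV[R]_m.+1) (h : R) :
  ftest_branch s (h *: v + y) = ftest_branch s y + h * ftest_branch s v.
Proof.
rewrite /ftest_branch !mxE; under eq_bigr do rewrite !mxE.
by rewrite big_split /= -mulr_sumr; ring.
Qed.

Lemma ftest_near_branch (y : 'rV[R]_m.+1) : y 0 ord0 != 0 ->
  \forall z \near y, f z = ftest_branch (Num.sg (y 0 ord0)) z.
Proof.
move=> y0; have near_y := @coord_continuous _ 1 m.+1 0 ord0 y _ (normr_near_sg y0).
near=> z; rewrite /ftest /ftest_branch.
have -> : `|z 0 ord0| = Num.sg (y 0 ord0) * z 0 ord0 by near: z; exact: near_y.
by rewrite mulrA.
Unshelve. all: by end_near. Qed.

Lemma differentiable_ftest (y : 'rV[R]_m.+1) : y 0 ord0 != 0 -> differentiable f y.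
Proof.
move=> y0.
have -> : f = (fun r : R^o => a *: (`|r| : R^o)) \o (fun z : 'rV[R]_m.+1 => z 0 ord0)
    + \sum_(i < m.+1 | i != ord0) (fun z : 'rV[R]_m.+1 => (z 0 i : R^o)).
  by apply/funext => z; rewrite fct_sumE.
apply: differentiableD.
  apply: differentiable_comp; first exact: differentiable_coord.
  by apply: differentiableZ; apply: differentiable_normr.
elim/big_ind: _ => // [g h|i _]; [exact: differentiableD|exact: differentiable_coord].
Qed.

Lemma gradv_ftest (y : 'rV[R]_m.+1) : y 0 ord0 != 0 ->
  gradv f y = branch_grad (Num.sg (y 0 ord0)).
Proof.
move=> y0; apply/rowP => i; rewrite !mxE -deriveE; last exact: differentiable_ftest.
rewrite (near_eq_derive _ (ftest_near_branch y0)).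
rewrite (derive_along_affine (ftest_branch_affine _ _ _)) /ftest_branch !mxE eqxx.
have [->|i0] := eqVneq i ord0.
  by rewrite mulr1 big1 ?addr0 // => j j0; rewrite mxE (negbTE j0).
rewrite mulr0 add0r (bigD1 i) //= mxE !eqxx big1 ?addr0 // => j /andP[_ ji].
by rewrite mxE (negbTE ji).
Qed.

Lemma dotv_branch_grad s s' :
  dotv (branch_grad s) (- branch_grad s') = - (a ^+ 2 * (s * s') + m%:R).
Proof.
rewrite /dotv big_ord_recl !mxE eqxx /=.
under eq_bigr => i _ do rewrite !mxE eq_sym (negbTE (neq_lift _ _)) mul1r.
by rewrite sumr_const card_ord mulNrn; ring.
Qed.

Lemma branch_step0 (x : 'rV[R]_m.+1) s t :
  (x + t *: - branch_grad s) 0 ord0 = x 0 ord0 - t * (a * s).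
Proof. by rewrite !mxE eqxx mulrN. Qed.

Lemma ftest_branch_step (x : 'rV[R]_m.+1) s t :
  f (x + t *: - branch_grad s) =
  f x + a * (`|x 0 ord0 - t * (a * s)| - `|x 0 ord0|) - t * m%:R.
Proof.
rewrite /ftest branch_step0.
rewrite (eq_bigr (fun i => x 0 i - t)) => [|i /negbTE i0]; last by rewrite !mxE i0 mulrN1.
rewrite big_split /= sumrN.
have -> : \sum_(i < m.+1 | i != ord0) t = t * m%:R.
  by rewrite sumr_const cardC1 card_ord mulr_natr.
ring.
Qed.

Lemma sg_branch_step (x : 'rV[R]_m.+1) t :
  x 0 ord0 - t * (a * Num.sg (x 0 ord0)) = Num.sg (x 0 ord0) * (`|x 0 ord0| - t * a).
Proof. by rewrite mulrBr -numEsg; ring. Qed.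

Lemma armijo_ftestE c1 (x : 'rV[R]_m.+1) t : x 0 ord0 != 0 ->
  armijo f c1 x (- gradv f x) t <->
  a * (`|(`|x 0 ord0| - t * a)| - `|x 0 ord0|) - t * m%:R <= - (c1 * t * (a ^+ 2 + m%:R)).
Proof.
move=> x0.
have sgx2 : Num.sg (x 0 ord0) * Num.sg (x 0 ord0) = 1 by rewrite -expr2 sqr_sg x0.
rewrite /armijo gradv_ftest // ftest_branch_step dotv_branch_grad sgx2 sg_branch_step.
by rewrite normrM normr_sg x0 mul1r; split=> ?; lra.
Qed.

Lemma wolfe_ftestE c2 (x : 'rV[R]_m.+1) t : x 0 ord0 != 0 -> t * a != `|x 0 ord0| ->
  wolfe f c2 x (- gradv f x) t <->
  - (c2 * (a ^+ 2 + m%:R)) <= - (a ^+ 2 * Num.sg (`|x 0 ord0| - t * a) + m%:R).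
Proof.
move=> x0 ta.
have sgx2 : Num.sg (x 0 ord0) * Num.sg (x 0 ord0) = 1 by rewrite -expr2 sqr_sg x0.
rewrite /wolfe; set y := x + _.
have y0E : y 0 ord0 = Num.sg (x 0 ord0) * (`|x 0 ord0| - t * a).
  by rewrite /y gradv_ftest // branch_step0 sg_branch_step.
have y0 : y 0 ord0 != 0 by rewrite y0E mulf_neq0 ?sgr_eq0 // subr_eq0 eq_sym.
rewrite (gradv_ftest y0) (gradv_ftest x0) !dotv_branch_grad y0E sgrM sgr_id.
rewrite [_ * _ * Num.sg (x 0 ord0)]mulrAC sgx2 mul1r mulr1.
by split=> [[_ ?]|?]; [lra|split; [exact: differentiable_ftest|lra]].
Qed.

Lemma ftest_short_step c1 c2 (x : 'rV[R]_m.+1) t :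
    0 < a -> c1 <= 1 -> c2 < 1 -> x 0 ord0 != 0 -> 0 <= t -> t * a < `|x 0 ord0| ->
  armijo f c1 x (- gradv f x) t /\ ~ wolfe f c2 x (- gradv f x) t.
Proof.
move=> a0 c1_le1 c2_lt1 x0 t0 ta.
have gap : 0 < `|x 0 ord0| - t * a by rewrite subr_gt0.
rewrite armijo_ftestE // wolfe_ftestE //; last by rewrite lt_eqF.
rewrite (gtr0_norm gap) (gtr0_sg gap).
have am_gt0 : 0 < a ^+ 2 + m%:R by rewrite ltr_pwDl ?exprn_gt0.
have tK : 0 <= t * (a ^+ 2 + m%:R) by apply: mulr_ge0 => //; apply: ltW.
by split; [nra|move=> ?; nra].
Qed.

Lemma ftest_long_step c1 c2 (x : 'rV[R]_m.+1) t :
    0 < a -> 0 <= c2 -> m%:R <= a ^+ 2 -> c1 * (a ^+ 2 + m%:R) <= m%:R ->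
    `|x 0 ord0| < t * a -> t * a <= 2 * `|x 0 ord0| ->
  armijo f c1 x (- gradv f x) t /\ wolfe f c2 x (- gradv f x) t.
Proof.
move=> a0 c2_ge0 m_le_a2 c1_am ta1 ta2.
have x0 : x 0 ord0 != 0 by rewrite -normr_gt0; nra.
have t0 : 0 <= t by nra.
have gap : `|x 0 ord0| - t * a < 0 by rewrite subr_lt0.
rewrite armijo_ftestE // wolfe_ftestE //; last by rewrite gt_eqF.
rewrite (ltr0_norm gap) (ltr0_sg gap).
have overshoot : a * (t * a - 2 * `|x 0 ord0|) <= 0 by rewrite pmulr_rle0 // subr_le0.
have descent : t * (c1 * (a ^+ 2 + m%:R)) <= t * m%:R by apply: ler_wpM2l.
have c2K : 0 <= c2 * (a ^+ 2 + m%:R).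
  by apply: mulr_ge0 => //; apply: addr_ge0; [exact: sqr_ge0|exact: ler0n].
by split; lra.
Qed.

End TestFunction.

Section Log2.
Context {R : realType}.

Lemma exp2_bracket (v : R) : 1 < v -> (forall i : nat, v != 2 ^+ i) ->
  exists K : nat, 2 ^+ K < v < 2 ^+ K.+1.
Proof.
move=> v_gt1 v_not_exp2.
have v_lt_exp2 : exists n : nat, v < 2 ^+ n.
  exists (Num.bound v); apply: (lt_le_trans (archi_boundP _)); first lra.
  by rewrite -natrX ler_nat; apply/ltnW/ltn_expl.
case: (ex_minnP v_lt_exp2) => -[|K]; first by rewrite expr0; lra.
move=> v_lt K_min; exists K; rewrite v_lt andbT lt_neqAle eq_sym v_not_exp2 /=.
by rewrite leNgt; apply/negP => /K_min; rewrite ltnn.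
Qed.

Lemma ceil_log2 (v : R) (K : nat) : 2 ^+ K < v -> v <= 2 ^+ K.+1 ->
  Num.ceil (ln v / ln 2) = K.+1%:Z.
Proof.
move=> v_gt v_le.
have ln2_gt0 : 0 < ln (2 : R) by apply: ln_gt0; lra.
have exp2_pos (n : nat) : (2 : R) ^+ n \is Num.pos by rewrite posrE exprn_gt0.
have v_pos : v \is Num.pos by rewrite posrE (lt_trans _ v_gt) // exprn_gt0.
apply: ceil_def; have -> : (K.+1%:Z - 1 = K%:Z)%R by rewrite -addn1 PoszD addrK.
rewrite ltr_pdivlMr // ler_pdivrMr // !mulr_natl -!lnXn //.
by rewrite ltr_ln ?ler_ln // v_gt v_le.
Qed.

End Log2.

Section TestFunctionGradientMethod.
Context {R : realType}.
Variables (m : nat) (a c1 c2 : R).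
Hypotheses (a_gt0 : 0 < a) (c1_gt0 : 0 < c1) (c1_lt_c2 : c1 < c2) (c2_lt1 : c2 < 1).
Hypotheses (m_le_a2 : m%:R <= a ^+ 2) (tau_le0 : c1 + m%:R * (c1 - 1) / a ^+ 2 <= 0).

Local Notation f := (@ftest R m a).

Lemma ftest_ls_returns (x : 'rV[R]_m.+1) (K : nat) :
    2 ^+ K * a < `|x 0 ord0| < 2 ^+ K.+1 * a ->
  ls_returns f c1 c2 x (- gradv f x) (2 ^+ K.+1).
Proof.
case/andP=> x_gt x_lt.
have x0 : x 0 ord0 != 0 by rewrite -normr_gt0 (lt_trans _ x_gt) // mulr_gt0 ?exprn_gt0.
have c1_am : c1 * (a ^+ 2 + m%:R) <= m%:R.
  have := mulr_le0_ge0 tau_le0 (sqr_ge0 a).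
  by rewrite mulrDl mulfVK ?expf_neq0 ?gt_eqF //; lra.
have [armijoK wolfeK] :
    armijo f c1 x (- gradv f x) (2 ^+ K.+1) /\ wolfe f c2 x (- gradv f x) (2 ^+ K.+1).
  apply: ftest_long_step => //; first exact: ltW (lt_trans c1_gt0 c1_lt_c2).
  by rewrite exprS -mulrA ler_pM2l // ltW.
apply: ls_returns_doubling armijoK wolfeK => i iK.
apply: ftest_short_step => //; first exact: ltW (lt_trans c1_lt_c2 c2_lt1).
by apply: le_lt_trans x_gt; rewrite ler_pM2r // ler_eXn2l ?ltr1n.
Qed.

Lemma ftest_run_not_dyadic (xs : nat -> 'rV[R]_m.+1) k :
    ~ dyadic (xs 0%N 0 ord0 / a) -> gd_run f c1 c2 xs k ->
  forall j, (j <= k)%N -> ~ dyadic (xs j 0 ord0 / a).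
Proof.
move=> nd0 run; elim=> [//|j IH jk] ndj1.
have ndj := IH (ltnW jk).
have xj0 : xs j 0 ord0 != 0.
  by apply: contra_notN ndj => /eqP ->; rewrite mul0r; exact: (@dyadic_nat R 0).
have [_ [t [[i [_ _ _ tE]] xsE]]] := run j jk.
have t_dyadic : dyadic t by rewrite tE; apply: ls_trial_dyadic.
apply: ndj; move: ndj1; rewrite xsE gradv_ftest // branch_step0.
have -> : (xs j 0 ord0 - t * (a * Num.sg (xs j 0 ord0))) / a =
    xs j 0 ord0 / a - t * Num.sg (xs j 0 ord0) by field; rewrite gt_eqF.
by move=> /dyadicD /(_ (dyadicM t_dyadic (dyadic_sg (xs j 0 ord0)))); rewrite subrK.
Qed.

End TestFunctionGradientMethod.

Unset Implicit Arguments.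

(* The ambient dimension is n = m + 1 (so n >= 2 iff 1 <= m, and n - 1 = m);
   x^(1) is x 0 ord0. *)
Theorem lemma3 (R : realType) (m : nat) (a c1 c2 : R) :
  (1 <= m)%N ->
  Num.sqrt (m%:R : R) <= a ->
  0 < c1 -> c1 < c2 -> c2 < 1 ->
  let f := @ftest R m a in
  let tau := c1 + (m%:R : R) * (c1 - 1) / a ^+ 2 in
  forall k : nat,
  exists Bad : set 'rV[R]_m.+1,
    gauss_null Bad /\
    forall x0 : 'rV[R]_m.+1, ~ Bad x0 ->
    forall xs : nat -> 'rV[R]_m.+1,
      xs 0%N = x0 -> gd_run f c1 c2 xs k ->
      tau <= 0 -> a < `|xs k 0 ord0| ->
      let r := Num.ceil (ln (`|xs k 0 ord0| / a) / ln 2) in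
      differentiable f (xs k) /\
      ls_returns f c1 c2 (xs k) (- gradv f (xs k)) ((2 : R) ^ r).
Proof.
move=> m_ge1 sqrt_m_le_a c1_gt0 c1_lt_c2 c2_lt1 f tau k.
have a_gt0 : 0 < a by apply: lt_le_trans sqrt_m_le_a; rewrite sqrtr_gt0 ltr0n.
have m_le_a2 : m%:R <= a ^+ 2.
  by rewrite -ler_sqrt ?sqr_ge0 // sqrtr_sqr ger0_norm // ltW.
exists [set x | dyadic (x 0 ord0 / a)]; split.
  by apply: gauss_null_dyadic_coord; rewrite gt_eqF.
move=> x0 x0_generic xs xs0 run tau_le0 xk_big r.
have xk_generic : ~ dyadic (xs k 0 ord0 / a).
  by apply: (ftest_run_not_dyadic a_gt0 _ run) => //; rewrite xs0.
have v_gt1 : 1 < `|xs k 0 ord0| / a by rewrite ltr_pdivlMr // mul1r.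
have v_not_exp2 (i : nat) : `|xs k 0 ord0| / a != 2 ^+ i.
  apply: contra_notN xk_generic => /eqP v_exp2.
  rewrite [X in X / a]numEsg -mulrA v_exp2.
  exact: dyadicM (dyadic_sg _) (dyadic_exp2 _).
have [K /andP[v_gt v_lt]] := exp2_bracket v_gt1 v_not_exp2.
have -> : r = K.+1%:Z by apply: ceil_log2 => //; apply: ltW.
split; first by apply: differentiable_ftest; rewrite -normr_gt0 (lt_trans _ xk_big).
by apply: ftest_ls_returns => //; rewrite -ltr_pdivlMr // v_gt -ltr_pdivrMr.
Qed.
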